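(* Let $\mathcal A$ be a weakly amenable Banach algebra such that each closed two-sided ideal $I$ of $\mathcal A$ has a bounded approximate identity $(e_\alpha)_\alpha$ which is quasi-central, i.e. $\lim_\alpha(ae_\alpha-e_\alpha a)=0$ for every $a\in\mathcal A$. Then $\mathcal A$ is ideally amenable.
   Context: For a closed two-sided ideal $I$, $I^*$ is a Banach $\mathcal A$-bimodule with $\langle x,a\cdot f\rangle=\langle xa,f\rangle$, $\langle x,f\cdot a\rangle=\langle ax,f\rangle$. A derivation $D:\mathcal A\to Z$ is a continuous linear map with $D(ab)=a\cdot D(b)+D(a)\cdot b$; it is inner if $D(a)=a\cdot z-z\cdot a$ for some $z\in Z$; $H^1(\mathcal A,Z)=\{0\}$ means every derivation is inner. $\mathcal A$ is weakly amenable if $H^1(\mathcal A,\mathcal A^* )=\{0\}$, and ideally amenable if $H^1(\mathcal A,I^* )=\{0\}$ for every closed two-sided ideal $I$. *)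

From HB Require Import structures.
From mathcomp Require Import all_boot all_order all_algebra.
From mathcomp Require Import all_classical all_reals.
From mathcomp Require Import topology normedtype.
From mathcomp.real_closed Require Import complex.
Set Implicit Arguments. Unset Strict Implicit. Unset Printing Implicit Defensive.
Import Order.TTheory GRing.Theory Num.Theory.
Import numFieldNormedType.Exports.
Local Open Scope classical_set_scope.
Local Open Scope ring_scope.

Section Defs.
Variables (R : realType).
Local Notation K := (R[i])%C.
Variable (A : completeNormedModType K).
Variable (mul : A -> A -> A).

Definition is_banach_algebra_mul : Prop :=
  [/\ forall a b c : A, mul a (mul b c) = mul (mul a b) c,
      forall (k : K) (a b c : A), mul (k *: a + b) c = k *: mul a c + mul b c,
      forall (k : K) (a b c : A), mul a (k *: b + c) = k *: mul a b + mul a c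
    & forall a b : A, `|mul a b| <= `|a| * `|b| ].

Definition closed_ideal (I : set A) : Prop :=
  [/\ I 0,
      forall (k : K) x y, I x -> I y -> I (k *: x + y),
      closed I,
      forall a x, I x -> I (mul a x)
    & forall a x, I x -> I (mul x a) ].

(* Elements of the dual I^* : functionals f : A -> K whose restriction to I
   is linear and bounded (values off I are irrelevant). *)
Definition dual_elt (I : set A) (f : A -> K) : Prop :=
  (forall (k : K) x y, I x -> I y -> f (k *: x + y) = k * f x + f y) /\
  (exists C : R, forall x, I x -> `|f x| <= (C%:C)%C * `|x|).

(* A (continuous) derivation D : A -> I^* , where <x, a.f> = <xa, f> and
   <x, f.a> = <ax, f>. Equality in I^* means equality on I. *)
Definition derivation_into_dual (I : set A) (D : A -> A -> K) : Prop :=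
  [/\ forall a, dual_elt I (D a),
      forall (k : K) a b x, I x -> D (k *: a + b) x = k * D a x + D b x,
      exists C : R, forall a x, I x -> `|D a x| <= (C%:C)%C * `|a| * `|x|
    & forall a b x, I x -> D (mul a b) x = D b (mul x a) + D a (mul b x) ].

Definition inner_into_dual (I : set A) (D : A -> A -> K) : Prop :=
  exists z : A -> K, dual_elt I z /\
    forall a x, I x -> D a x = z (mul x a) - z (mul a x).

Definition H1_dual_trivial (I : set A) : Prop :=
  forall D, derivation_into_dual I D -> inner_into_dual I D.

Definition weakly_amenable : Prop := H1_dual_trivial setT.

Definition ideally_amenable : Prop :=
  forall I, closed_ideal I -> H1_dual_trivial I.

Definition directed_set (T : Type) (le : T -> T -> Prop) : Prop :=
  [/\ inhabited T, (forall t, le t t),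
      (forall s t u, le s t -> le t u -> le s u)
    & forall s t, exists u, le s u /\ le t u].

Definition net_lim (T : Type) (le : T -> T -> Prop) (u : T -> A) (l : A) : Prop :=
  forall eps : R, 0 < eps -> exists t0, forall t, le t0 t -> `|u t - l| < (eps%:C)%C.

Definition has_quasi_central_bai (I : set A) : Prop :=
  exists (T : Type) (le : T -> T -> Prop) (e : T -> A),
    [/\ directed_set le,
        (forall t, I (e t)),
        (exists M : R, forall t, `|e t| <= (M%:C)%C),
        (forall x, I x -> net_lim le (fun t => mul x (e t)) x /\
                          net_lim le (fun t => mul (e t) x) x)
      & forall a, net_lim le (fun t => mul a (e t) - mul (e t) a) 0 ].

End Defs.

From HB Require Import structures.
From mathcomp Require Import all_boot all_order all_algebra.
From mathcomp Require Import all_classical all_reals.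
From mathcomp Require Import topology normedtype.
From mathcomp.real_closed Require Import complex.
From mathcomp Require Import ring.
Import numFieldNormedType.Exports.
Import Order.TTheory GRing.Theory Num.Theory.
Set Implicit Arguments.
Unset Strict Implicit.
Unset Printing Implicit Defensive.
Local Open Scope classical_set_scope.
Local Open Scope ring_scope.

(* Extend a derivation D : A -> I^* to A -> A^* by
     D~(a)(y) := lim_U D(a)(y e_t),
   where (e_t) is the quasi-central bounded approximate identity of I and U is
   an ultrafilter finer than its tail filter: y e_t lies in I, and bounded
   complex-valued families converge along an ultrafilter.  Quasi-centrality,
   x e_t a - x a e_t -> 0, makes D~ a derivation into A^*, hence inner by weak
   amenability, D~(a) = a.z - z.a; and D~(a)(x) = D(a)(x) for x in I, since
   x e_t -> x and D(a) is continuous on I.  Only the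
   right-hand approximate identity property of (e_t) is used. *)

Section UltraLimits.
Variables (T : Type) (U : set_system T).
Context {UU : UltraFilter U}.

Lemma ultra_cluster_cvg {X : topologicalType} (g : T -> X) (p : X) :
  cluster (g @ U) p -> g @ U --> p.
Proof.
move=> gUp N Np; have [//|UNc] := in_ultra_setVsetC (g @^-1` N) UU.
by have [x []] := gUp (~` N) N UNc Np.
Qed.

Lemma ultra_compact_cvg {X : topologicalType} (K : set X) (g : T -> X) :
  compact K -> (forall t, K (g t)) -> exists p : X, g @ U --> p.
Proof.
move=> cK gK; have UK : U (g @^-1` K) by apply: filterS filterT => t _.
by have [p [_ /ultra_cluster_cvg]] := cK (fmap g U) _ UK; exists p.
Qed.

End UltraLimits.

Section NormedLimits.
Variables (K : numFieldType) (T : Type) (F : set_system T).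

Lemma cvg_norm_le {FF : ProperFilter F} (V : normedModType K) (f : T -> V)
    (l : V) (b : K) :
  f @ F --> l -> (forall t, `|f t| <= b) -> `|l| <= b.
Proof.
move=> /cvgrPdist_lt fl fb; apply/ler_addgt0Pr => e e0.
have [t flt] := filter_ex (fl e e0).
have := ler_normD (l - f t) (f t); rewrite subrK => /le_trans; apply.
by rewrite addrC lerD // ltW.
Qed.

Lemma cvg_dominated {FF : Filter F} (V W : normedModType K) (u : T -> V)
    (g : T -> W) (l : V) (p : W) (c : K) :
  0 <= c -> (forall t, `|g t - p| <= c * `|u t - l|) ->
  u @ F --> l -> g @ F --> p.
Proof.
move=> c0 gu /cvgrPdist_lt ul; apply/cvgrPdist_lt => e e0.
have c1 : 0 < c + 1 by rewrite ltr_wpDl.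
have small : c * (e / (c + 1)) < e.
  by rewrite mulrCA gtr_pMr // ltr_pdivrMr // mul1r ltrDl.
apply: filterS (ul _ (divr_gt0 e0 c1)) => t ult.
rewrite distrC; apply: le_lt_trans (gu t) (le_lt_trans _ small).
by rewrite ler_wpM2l // distrC ltW.
Qed.

End NormedLimits.

Section ComplexLimits.
Variable R : realType.
Local Open Scope complex_scope.

Lemma complex_gt0 (z : R[i]) : 0 < z -> exists2 r : R, 0 < r & z = r%:C.
Proof. by case: z => a b; rewrite ltcE /= => /andP[/eqP -> a0]; exists a. Qed.

Lemma complex_Re_ge0 (z : R[i]) : 0 <= z -> (complex.Re z)%:C = z.
Proof. by case: z => a b; rewrite lecE /= => /andP[/eqP ->]. Qed.

Lemma normc_real (x : R) : `|x%:C| = `|x|%:C.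
Proof. by rewrite normc_def /= expr0n addr0 sqrtr_sqr. Qed.

Lemma normc_Re_le (z : R[i]) : `|complex.Re z|%:C <= `|z|.
Proof. by rewrite normc_def lecR -sqrtr_sqr ler_wsqrtr // lerDl sqr_ge0. Qed.

Lemma normc_Im_le (z : R[i]) : `|complex.Im z|%:C <= `|z|.
Proof. by rewrite normc_def lecR -sqrtr_sqr ler_wsqrtr // lerDr sqr_ge0. Qed.

Lemma cvg_real_complex (T : Type) (F : set_system T) {FF : Filter F}
    (f : T -> R) (l : R) :
  f @ F --> l -> (fun t => (f t)%:C : R[i]^o) @ F --> (l%:C : R[i]^o).
Proof.
move=> /cvgrPdist_lt fl; apply/cvgrPdist_lt => _ /complex_gt0[e e0 ->].
by apply: filterS (fl e e0) => t; rewrite -raddfB normc_real ltcR.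
Qed.

Variables (T : Type) (U : set_system T).
Context {UU : UltraFilter U}.

Lemma ultra_bounded_cvg_real (g : T -> R) (b : R) :
  (forall t, `|g t| <= b) -> exists p : R, g @ U --> p.
Proof.
move=> gb; apply: (ultra_compact_cvg (@segment_compact _ (- b) b)) => t.
by rewrite /= in_itv /= -ler_norml.
Qed.

Lemma ultra_bounded_cvg_complex (g : T -> R[i]^o) (b : R[i]) :
  (forall t, `|g t| <= b) -> exists p : R[i]^o, g @ U --> p.
Proof.
move=> gb.
have [x gx] : exists x : R, (fun t => complex.Re (g t)) @ U --> x.
  apply: (ultra_bounded_cvg_real (b := complex.Re b)) => t.
  by have := le_trans (normc_Re_le _) (gb t); rewrite lecE => /andP[].
have [y gy] : exists y : R, (fun t => complex.Im (g t)) @ U --> y.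
  apply: (ultra_bounded_cvg_real (b := complex.Re b)) => t.
  by have := le_trans (normc_Im_le _) (gb t); rewrite lecE => /andP[].
exists (x%:C + 'i * y%:C).
rewrite (funext (fun t => complexE (g t))).
by apply: cvgD; [|apply: cvgMl_tmp]; exact: cvg_real_complex.
Qed.

End ComplexLimits.

Section Nets.
Variables (T : Type) (le : T -> T -> Prop).

Definition tail_filter : set_system T :=
  filter_from setT (fun t0 => [set t | le t0 t]).

Lemma tail_filter_proper : directed_set le -> ProperFilter tail_filter.
Proof.
case=> [[t0] le_refl le_transitive le_directed].
apply: filter_from_proper => [|t _]; last by exists t; exact: le_refl.
apply: filter_fromT_filter; first by exists t0.
move=> s t; have [u [su tu]] := le_directed s t.
by exists u => v uv; split; apply: le_transitive uv.
Qed.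

Lemma net_lim_cvg (R : realType) (A : completeNormedModType R[i])
    (F : set_system T) {FF : Filter F} (u : T -> A) (l : A) :
  tail_filter `<=` F -> net_lim le u l -> u @ F --> l.
Proof.
move=> tailF ul; apply/cvgrPdist_lt => _ /complex_gt0[e e0 ->].
have [t0 ult] := ul e e0.
have tail_t0 : tail_filter [set t | le t0 t] by exists t0.
by apply: filterS (tailF _ tail_t0) => t /ult; rewrite distrC.
Qed.

End Nets.

Section BanachAlgebra.
Variables (R : realType) (A : completeNormedModType R[i]) (mul : A -> A -> A).
Hypothesis mulP : is_banach_algebra_mul mul.

Lemma bmulA a b c : mul a (mul b c) = mul (mul a b) c.
Proof. by case: mulP. Qed.

Lemma bmulZDl k a b c : mul (k *: a + b) c = k *: mul a c + mul b c.
Proof. by case: mulP. Qed.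

Lemma bmulBr a b c : mul a (b - c) = mul a b - mul a c.
Proof.
case: mulP => _ _ mulZDr _.
by rewrite -scaleN1r addrC mulZDr scaleN1r addrC.
Qed.

Lemma norm_bmul_le a b : `|mul a b| <= `|a| * `|b|.
Proof. by case: mulP. Qed.

Variable I : set A.
Hypothesis Iideal : closed_ideal mul I.

Lemma closed_idealB x y : I x -> I y -> I (x - y).
Proof.
by case: Iideal => _ IZD _ _ _ Ix Iy; rewrite -scaleN1r addrC; apply: IZD.
Qed.

Lemma closed_idealMl a x : I x -> I (mul a x).
Proof. by case: Iideal => _ _ _ IMl _; apply: IMl. Qed.

Lemma closed_idealMr a x : I x -> I (mul x a).
Proof. by case: Iideal => _ _ _ _ IMr; apply: IMr. Qed.

End BanachAlgebra.

Section DualElements.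
Variables (R : realType) (A : completeNormedModType R[i]).
Variables (I : set A) (f : A -> R[i]).
Hypothesis fI : dual_elt I f.

Lemma dual_eltD x y : I x -> I y -> f (x + y) = f x + f y.
Proof.
by case: fI => flin _ Ix Iy; have := flin 1 x y Ix Iy; rewrite scale1r mul1r.
Qed.

Lemma dual_eltB x y : I x -> I y -> f (x - y) = f x - f y.
Proof.
case: fI => flin _ Ix Iy.
by rewrite -scaleN1r addrC flin // mulN1r addrC.
Qed.

End DualElements.

Lemma derivation_into_dual_bound (R : realType) (A : completeNormedModType R[i])
    (mul : A -> A -> A) (I : set A) (D : A -> A -> R[i]) :
  derivation_into_dual mul I D ->
  exists2 c : R, 0 <= c & forall a x, I x -> `|D a x| <= c%:C%C * `|a| * `|x|.
Proof.
case=> _ _ [c D_le] _; exists (Num.max c 0) => [|a x Ix].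
  by rewrite le_max lexx orbT.
apply: le_trans (D_le a x Ix) _.
by rewrite -!mulrA ler_wpM2r ?mulr_ge0 // lecR le_max lexx.
Qed.

Lemma inner_into_dual_restrict (R : realType) (A : completeNormedModType R[i])
    (mul : A -> A -> A) (I : set A) (D D' : A -> A -> R[i]) :
  inner_into_dual mul setT D' -> (forall a x, I x -> D' a x = D a x) ->
  inner_into_dual mul I D.
Proof.
move=> [z [[zlin [Cz z_le]] D'z]] D'D; exists z; split; first split.
- by move=> k x y _ _; apply: zlin.
- by exists Cz => x _; apply: z_le.
- by move=> a x Ix; rewrite -D'D // D'z.
Qed.

Section DerivationExtension.
Variables (R : realType) (A : completeNormedModType R[i]) (mul : A -> A -> A).
Hypothesis mulP : is_banach_algebra_mul mul.
Variables (I : set A) (D : A -> A -> R[i]) (c : R).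
Hypotheses (Iideal : closed_ideal mul I) (Dder : derivation_into_dual mul I D).
Hypotheses (c_ge0 : 0 <= c)
  (D_le : forall a x, I x -> `|D a x| <= c%:C%C * `|a| * `|x|).
Variables (T : Type) (U : set_system T) (e : T -> A) (M : R).
Context {UU : UltraFilter U}.
Hypotheses (eI : forall t, I (e t)) (e_le : forall t, `|e t| <= M%:C%C).
Hypothesis e_right_unit : forall x, I x -> (fun t => mul x (e t)) @ U --> x.
Hypothesis e_quasi_central :
  forall a, (fun t => mul a (e t) - mul (e t) a) @ U --> 0.

(* Limits of complex-valued families are taken in [R[i]^o], the copy of
   [R[i]] that carries its normed topology. *)
Let D_net a y : T -> R[i]^o := fun t => D a (mul y (e t)).

Definition Dext a y : R[i] := lim (D_net a y @ U).

Let D_dual a : dual_elt I (D a). Proof. by case: Dder. Qed.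

Lemma norm_D_mul_le a y z :
  I (mul y z) -> `|D a (mul y z)| <= c%:C%C * `|a| * (`|y| * `|z|).
Proof.
move=> Iyz; apply: le_trans (D_le a Iyz) _.
by rewrite ler_wpM2l ?mulr_ge0 ?ler0c ?norm_bmul_le.
Qed.

Lemma Dext_cvg a y : D_net a y @ U --> (Dext a y : R[i]^o).
Proof.
apply/cvg_ex.
apply: (ultra_bounded_cvg_complex (b := c%:C%C * `|a| * (`|y| * M%:C%C))) => t.
apply: le_trans (norm_D_mul_le _ (closed_idealMl Iideal _ (eI t))) _.
by rewrite ler_wpM2l ?mulr_ge0 ?ler0c // ler_wpM2l.
Qed.

Lemma Dext_lim a y (p : R[i]^o) : D_net a y @ U --> p -> Dext a y = p.
Proof. exact: norm_cvg_lim. Qed.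

Lemma Dext_eq a x : I x -> Dext a x = D a x.
Proof.
move=> Ix; apply: Dext_lim.
apply: (cvg_dominated (c := c%:C%C * `|a|)) (e_right_unit Ix).
  by rewrite mulr_ge0 ?ler0c.
move=> t; rewrite /D_net -(dual_eltB (D_dual a)) //.
  by apply/D_le/(closed_idealB Iideal) => //; exact: (closed_idealMl Iideal).
exact: (closed_idealMl Iideal).
Qed.

Lemma norm_Dext_le a y : `|Dext a y| <= (c * M)%:C%C * `|a| * `|y|.
Proof.
have -> : (c * M)%:C%C * `|a| * `|y| = c%:C%C * `|a| * (`|y| * M%:C%C).
  by rewrite rmorphM /=; ring.
apply: cvg_norm_le (@Dext_cvg a y) _ => t.
apply: le_trans (norm_D_mul_le _ (closed_idealMl Iideal _ (eI t))) _.
by rewrite ler_wpM2l ?mulr_ge0 ?ler0c // ler_wpM2l.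
Qed.

Lemma Dext_dual a : dual_elt setT (Dext a).
Proof.
split=> [k x y _ _ | ].
  apply: Dext_lim.
  have -> : D_net a (k *: x + y) = fun t => k * D_net a x t + D_net a y t.
    apply: funext => t; rewrite /D_net (bmulZDl mulP).
    by case: (D_dual a) => -> //; exact: (closed_idealMl Iideal).
  exact: cvgD (cvgMl_tmp (@Dext_cvg a x)) (@Dext_cvg a y).
exists (c * M * complex.Re `|a|) => y _.
by rewrite rmorphM /= complex_Re_ge0 //; exact: norm_Dext_le.
Qed.

Lemma DextZD k a b y : Dext (k *: a + b) y = k * Dext a y + Dext b y.
Proof.
apply: Dext_lim.
have -> : D_net (k *: a + b) y = fun t => k * D_net a y t + D_net b y t.
  apply: funext => t; case: Dder => _ D_linear _ _.
  by rewrite /D_net D_linear //; exact: (closed_idealMl Iideal).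
exact: cvgD (cvgMl_tmp (@Dext_cvg a y)) (@Dext_cvg b y).
Qed.

Lemma Dext_leibniz a b x :
  Dext (mul a b) x = Dext b (mul x a) + Dext a (mul b x).
Proof.
have Icomm t : I (mul (e t) a - mul a (e t)).
  by apply: (closed_idealB Iideal); [exact: (closed_idealMr Iideal) |
                                     exact: (closed_idealMl Iideal)].
have commutator_cvg0 :
    (fun t => D b (mul x (mul (e t) a - mul a (e t))) : R[i]^o) @ U --> 0.
  apply: (cvg_dominated (c := c%:C%C * `|b| * `|x|)) (e_quasi_central a).
    by rewrite !mulr_ge0 ?ler0c.
  move=> t; rewrite !subr0 distrC -[_ * `|_ - _|]mulrA.
  by apply: norm_D_mul_le; exact: (closed_idealMl Iideal).
apply: Dext_lim.
have -> : D_net (mul a b) x = fun t =>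
    D_net b (mul x a) t + D b (mul x (mul (e t) a - mul a (e t)))
    + D_net a (mul b x) t.
  apply: funext => t; case: Dder => _ _ _ D_leibniz.
  rewrite /D_net D_leibniz; last exact: (closed_idealMl Iideal).
  rewrite (bmulA mulP); congr (_ + _).
  rewrite -(dual_eltD (D_dual b)); last 2 first.
  1,2: exact: (closed_idealMl Iideal).
  by rewrite (bmulBr mulP) !(bmulA mulP) addrC subrK.
rewrite -[Dext b (mul x a)]addr0.
exact: cvgD (cvgD (@Dext_cvg b (mul x a)) commutator_cvg0)
            (@Dext_cvg a (mul b x)).
Qed.

Lemma Dext_derivation : derivation_into_dual mul setT Dext.
Proof.
split=> [a | k a b y _ | | a b y _]; [exact: Dext_dual | exact: DextZD | |
                                      exact: Dext_leibniz].
by exists (c * M) => a y _; exact: norm_Dext_le.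
Qed.

End DerivationExtension.

Theorem corollary3p5 (R : realType) (A : completeNormedModType (R[i])%C)
  (mul : A -> A -> A) :
  is_banach_algebra_mul mul ->
  weakly_amenable mul ->
  (forall I : set A, closed_ideal mul I -> has_quasi_central_bai mul I) ->
  ideally_amenable mul.
Proof.
move=> mulP WA qcbai I Iideal D Dder.
have [T [le [e [le_directed eI [M e_le] e_bai e_qc]]]] := qcbai I Iideal.
have [U [UU tailU]] := ultraFilterLemma (tail_filter_proper le_directed).
have [c c_ge0 D_le] := derivation_into_dual_bound Dder.
have e_right_unit x : I x -> (fun t => mul x (e t)) @ U --> x.
  by move=> Ix; exact: net_lim_cvg tailU (e_bai x Ix).1.
have e_quasi_central a : (fun t => mul a (e t) - mul (e t) a) @ U --> 0.
  exact: net_lim_cvg tailU (e_qc a).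
apply: inner_into_dual_restrict.
  exact/WA/(Dext_derivation mulP Iideal Dder c_ge0 D_le eI e_le
             e_quasi_central).
by move=> a x; exact: (Dext_eq Iideal Dder c_ge0 D_le eI e_right_unit a).
Qed.
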